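(* Let $V$ be a finite set of variables, let $D_{\mathit{ds}}$ be the causal ABA framework defined in the context, let $\sigma\in\{\text{preferred},\text{stable}\}$, let $S\in\sigma(D_{\mathit{ds}})$ and let $G(S)=(V,\{(u,v)\mid\mathit{arr}_{uv}\in S\})$. Then for all distinct $x,y\in V$ and all $\mathbf Z\subseteq V\setminus\{x,y\}$: $(x\perp\!\!\!\perp y\mid\mathbf Z)\in S$ if and only if $x$ and $y$ are d-separated given $\mathbf Z$ in $G(S)$.
   Context: ABA. An ABA framework is $D=(\mathcal L,\mathcal R,\mathcal A,\overline{\cdot})$ with sentences $\mathcal L$, rules $a_0\leftarrow a_1,\dots,a_n$ ($n\ge0$), assumptions $\mathcal A\subseteq\mathcal L$ and contrary function $\overline{\cdot}:\mathcal A\to\mathcal L$. $S\vdash q$ ($S\subseteq\mathcal A$) if there is a finite rooted labelled tree with root $q$, set of leaf labels $S$ or $S\cup\{\top\}$, and every inner node labelled by the head of a rule whose children are labelled by the distinct body elements (one child $\top$ for an empty body). $S$ attacks $T$ if some $S'\subseteq S$ derives $\overline a$ for some $a\in T$. Conflict-free: does not attack itself; $S$ defends $T$ if it attacks every attacker of $T$; admissible: conflict-free and self-defending; complete: admissible and contains every assumption set it defends; preferred: $\subseteq$-maximal complete; stable: admissible and attacks $\{a\}$ for every assumption $a\notin S$. Graphs. A path in a directed graph is a sequence of distinct nodes with consecutive nodes adjacent; an inner node $x_i$ of a path $x_1\dots x_n$ is a collider if $(x_{i-1},x_i)$ and $(x_{i+1},x_i)$ are edges; $z'$ is a descendant of $z$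 if there is a directed path from $z$ to $z'$. For a DAG $H$ and $\mathbf Z\subseteq V\setminus\{x,y\}$, an $x$-$y$-path is $\mathbf Z$-active if every collider on it is in $\mathbf Z$ or has a descendant in $\mathbf Z$, and every other node on it is not in $\mathbf Z$; $x,y$ are d-separated given $\mathbf Z$ if no $\mathbf Z$-active $x$-$y$-path exists. An $x$-$y$-collider-tree of a DAG $H$ is a subgraph $t$ of $H$ together with an $x$-$y$-path $p_t$ in $t$ such that every node of $t$ not on $p_t$ is a descendant of some collider of $p_t$; it is $\mathbf Z$-active if $p_t$ is $\mathbf Z$-active in the graph $(V,\text{edges of }t)$. The framework $D_{\mathit{ds}}$. Assumptions: $\mathit{arr}_{xy}$ for all ordered pairs of distinct $x,y\in V$; one $\mathit{noe}_{xy}=\mathit{noe}_{yx}$ per unordered pair; and independence assumptions $(x\perp\!\!\!\perp y\mid\mathbf Z)$ for all $\mathbf Z\subseteq V$, distinct $x,y\in V\setminus\mathbf Z$, with $(x\perp\!\!\!\perp y\mid\mathbf Z)$ identified with $(y\perp\!\!\!\perp x\mid\mathbf Z)$. Each assumption $a$ has its own distinct fresh contrary $\overline a$. Rules: (i) $\overline a\leftarrow b$ for distinct $a,b\in\{\mathit{arr}_{xy},\mathit{arr}_{yx},\mathit{noe}_{xy}\}$; (ii) for every sequence $x_1\dots x_k$ with consecutive elements distinct and $x_1=x_k$ and every $1\le i<k$: $\overline{\mathit{arr}_{x_ix_{i+1}}}\leftarrow\mathit{arr}_{x_1x_2},\dots,\mathit{arr}_{x_{k-1}x_k}$; (iii)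 $\mathit{dpath}_{xy}\leftarrow\mathit{arr}_{xy}$; $\mathit{dpath}_{xz}\leftarrow\mathit{dpath}_{xy},\mathit{arr}_{yz}$; $e_{xy}\leftarrow\mathit{arr}_{xy}$; $e_{xy}\leftarrow\mathit{arr}_{yx}$; $\overline{\mathit{noe}_{xy}}\leftarrow e_{xy}$; (iv) for all distinct $x,y$, $\mathbf Z\subseteq V\setminus\{x,y\}$ and every $\mathbf Z$-active $x$-$y$-collider-tree $t$ (of any DAG on $V$), the rule $\overline{(x\perp\!\!\!\perp y\mid\mathbf Z)}\leftarrow\{\mathit{arr}_{uv}\mid(u,v)\text{ an edge of }t\}$. *)

From Stdlib Require Import Relations.Relation_Operators List.
From mathcomp Require Import all_boot.
Set Implicit Arguments. Unset Strict Implicit. Unset Printing Implicit Defensive.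

Section DDS.
Variable V : finType.

(* Arr x y = arr_xy ; Noe e = noe for the unordered pair e = {x,y} ;
   Ind P Z = (x _||_ y | Z) with P = {x,y}; using the 2-element set P
   realises the identifications noe_xy = noe_yx and (x||y|Z) = (y||x|Z). *)
Inductive asm : Type :=
| Arr of V & V
| Noe of {set V}
| Ind of {set V} & {set V}.

Inductive sent : Type :=
| Asm of asm
| Ctr of asm
| Dpath of V & V
| Edg of V & V.

Definition is_asm (a : asm) : Prop :=
  match a with
  | Arr x y => x <> y
  | Noe e => #|e| = 2
  | Ind P Z => #|P| = 2 /\ [disjoint P & Z]
  end.

Definition adj (E : V -> V -> Prop) (u v : V) : Prop := E u v \/ E v u.

Definition is_path (E : V -> V -> Prop) (p : seq V) (x y : V) : Prop :=
  [/\ (0 < size p)%N, head x p = x, last x p = y, uniq p &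
      forall (l r : seq V) (a b : V), p = l ++ a :: b :: r -> adj E a b].

Definition collider (E : V -> V -> Prop) (a b c : V) : Prop := E a b /\ E c b.

Definition desc (E : V -> V -> Prop) (u v : V) : Prop := clos_refl_trans V E u v.

Definition active (E : V -> V -> Prop) (Z : {set V}) (p : seq V) : Prop :=
  forall (l r : seq V) (a b c : V), p = l ++ a :: b :: c :: r ->
    (collider E a b c -> (b \in Z \/ exists z, z \in Z /\ desc E b z)) /\
    (~ collider E a b c -> b \notin Z).

Definition dsep (E : V -> V -> Prop) (x y : V) (Z : {set V}) : Prop :=
  ~ exists p, is_path E p x y /\ active E Z p.

Definition acyclic (E : V -> V -> Prop) : Prop :=
  forall u v, E u v -> ~ clos_refl_trans V E v u.

Definition set_rel (Et : {set V * V}) (u v : V) : Prop := (u, v) \in Et.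

Definition collider_tree (H : V -> V -> Prop) (x y : V)
    (N : {set V}) (Et : {set V * V}) (p : seq V) : Prop :=
  [/\ forall e, e \in Et -> [/\ H e.1 e.2, e.1 \in N & e.2 \in N],
      is_path (set_rel Et) p x y,
      forall v, v \in p -> v \in N &
      forall w, w \in N -> w \notin p ->
        exists (l r : seq V) (a b c : V),
          [/\ p = l ++ a :: b :: c :: r, collider (set_rel Et) a b c &
              desc (set_rel Et) b w]].

Definition excl_trio (x y : V) : seq asm := [:: Arr x y; Arr y x; Noe [set x; y]].

Inductive rule : sent -> seq sent -> Prop :=
| r_excl x y a b : x != y -> List.In a (excl_trio x y) -> List.In b (excl_trio x y) ->
    a <> b -> rule (Ctr a) [:: Asm b]
| r_cycle (x : V) (s : seq V) (i : nat) :
    path (fun u v => u != v) x s -> last x s = x -> (i < size s)%N ->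
    rule (Ctr (Arr (nth x (x :: s) i) (nth x s i)))
         [seq Asm (Arr q.1 q.2) | q <- zip (x :: s) s]
| r_dpath1 x y : x != y -> rule (Dpath x y) [:: Asm (Arr x y)]
| r_dpath2 x y z : y != z -> rule (Dpath x z) [:: Dpath x y; Asm (Arr y z)]
| r_e1 x y : x != y -> rule (Edg x y) [:: Asm (Arr x y)]
| r_e2 x y : x != y -> rule (Edg x y) [:: Asm (Arr y x)]
| r_noe x y : x != y -> rule (Ctr (Noe [set x; y])) [:: Edg x y]
| r_ind (x y : V) (Z : {set V}) (H : V -> V -> Prop) (N : {set V})
        (Et : {set V * V}) (p : seq V) :
    x != y -> x \notin Z -> y \notin Z -> acyclic H ->
    collider_tree H x y N Et p -> active (set_rel Et) Z p ->
    rule (Ctr (Ind [set x; y] Z)) [seq Asm (Arr e.1 e.2) | e <- enum Et].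

Definition asm_set (S : asm -> Prop) : Prop := forall a, S a -> is_asm a.

(* der S q : q is the root of a finite derivation tree whose assumption leaves
   all lie in S (i.e. S' |- q for some S' included in S). *)
Inductive der (S : asm -> Prop) : sent -> Prop :=
| der_asm a : is_asm a -> S a -> der S (Asm a)
| der_rule h body : rule h body -> (forall b, List.In b body -> der S b) -> der S h.

Definition attacks (S T : asm -> Prop) : Prop :=
  exists a, T a /\ der S (Ctr a).

Definition conflict_free (S : asm -> Prop) : Prop := ~ attacks S S.

Definition defends (S T : asm -> Prop) : Prop :=
  forall U, asm_set U -> attacks U T -> attacks S U.

Definition admissible (S : asm -> Prop) : Prop :=
  [/\ asm_set S, conflict_free S & defends S S].

Definition complete (S : asm -> Prop) : Prop :=
  admissible S /\ forall T, asm_set T -> defends S T -> forall a, T a -> S a.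

Definition preferred (S : asm -> Prop) : Prop :=
  complete S /\
  forall S', complete S' -> (forall a, S a -> S' a) -> forall a, S' a -> S a.

Definition stable (S : asm -> Prop) : Prop :=
  admissible S /\ forall a, is_asm a -> ~ S a -> attacks S (fun b => b = a).

Definition GS (S : asm -> Prop) (u v : V) : Prop := S (Arr u v).

End DDS.

(* Since S is conflict-free, the cycle rules (ii) make G(S) acyclic.  If x and
   y are d-connected given Z in G(S), an active path together with the
   descendants of its colliders is a Z-active collider tree made of arrows of
   S, so by rule (iv) S attacks (x _||_ y | Z), which therefore is not in S.
   Conversely, every attack on (x _||_ y | Z) uses the arrows of a collider tree
   whose path stays Z-active in any DAG containing those arrows.  A stable S
   missing the assumption would attack it with arrows of G(S), contradicting
   d-separation.  A preferred S contains, for each pair u <> v, one of arr_uv,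
   arr_vu, noe_uv (otherwise noe_uv could be added), so it attacks every arrow
   it lacks; hence it defends (x _||_ y | Z) and, being complete, contains it. *)

From HB Require Import structures.
From mathcomp Require Import all_boot boolp.
From Stdlib Require Import Relations.Relation_Operators Relations.Operators_Properties.
From Stdlib Require List.

Set Implicit Arguments. Unset Strict Implicit. Unset Printing Implicit Defensive.

Lemma InP (T : eqType) (x : T) (s : seq T) : reflect (List.In x s) (x \in s).
Proof.
elim: s => [|a s IH] /=; first by constructor.
rewrite in_cons; apply: (iffP orP).
- by case=> [/eqP ->|/IH]; [left|right].
- by case=> [->|/IH]; [left; rewrite eqxx|right].
Qed.

Lemma In_map (A B : Type) (f : A -> B) (s : seq A) a :
  List.In a s -> List.In (f a) (map f s).
Proof. exact: List.in_map. Qed.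

Lemma In_map_inv (A B : Type) (f : A -> B) (s : seq A) b :
  List.In b (map f s) -> exists2 a, List.In a s & b = f a.
Proof. by case/List.in_map_iff=> a [<- Ha]; exists a. Qed.

Lemma rev_eq_cat (T : Type) (s l m : seq T) : rev s = l ++ m -> s = rev m ++ rev l.
Proof. by move=> e; rewrite -[s]revK e rev_cat. Qed.

Lemma clos_rt_restrict (A : Type) (R R' : A -> A -> Prop) (P : A -> Prop) a b :
  (forall u v, P u -> P v -> R u v -> R' u v) ->
  (forall c, clos_refl_trans A R a c -> P c) ->
  clos_refl_trans A R a b -> clos_refl_trans A R' a b.
Proof.
move=> RR' Pdesc /clos_rt_rtn1_iff.
elim=> [|u v Ruv /clos_rt_rtn1_iff Rau IH]; first exact: rt_refl.
apply: rt_trans IH (rt_step _ _ _ _ (RR' _ _ (Pdesc _ Rau) _ Ruv)).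
exact/Pdesc/(rt_trans _ _ _ _ _ Rau)/rt_step.
Qed.

Lemma clos_rt_mono (A : Type) (R R' : A -> A -> Prop) a b :
  (forall u v, R u v -> R' u v) ->
  clos_refl_trans A R a b -> clos_refl_trans A R' a b.
Proof.
by move=> RR'; apply: (clos_rt_restrict (P := fun _ => True)) => // u v _ _ /RR'.
Qed.

Section DSeparation.
Variable V : finType.
Implicit Types (S U X Y : asm V -> Prop) (E : V -> V -> Prop) (x y u v : V) (Z : {set V})
  (h q : sent V) (body : seq (sent V)).

Definition asm_code (a : asm V) : (V * V + {set V}) + {set V} * {set V} :=
  match a with
  | Arr x y => inl (inl (x, y))
  | Noe e => inl (inr e)
  | Ind P Z => inr (P, Z)
  end.

Definition asm_decode (t : (V * V + {set V}) + {set V} * {set V}) : asm V :=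
  match t with
  | inl (inl (x, y)) => Arr x y
  | inl (inr e) => Noe e
  | inr (P, Z) => Ind P Z
  end.

Lemma asm_codeK : cancel asm_code asm_decode. Proof. by case. Qed.

HB.instance Definition _ := Finite.copy (asm V) (can_type asm_codeK).

Lemma set2_eq_cases x y u v : [set x; y] = [set u; v] -> u != v ->
  (x = u /\ y = v) \/ (x = v /\ y = u).
Proof.
move=> exy nuv.
have: u \in [set x; y] by rewrite exy set21.
have: v \in [set x; y] by rewrite exy set22.
rewrite !inE => /orP[]/eqP ev /orP[]/eqP eu; subst u v;
  rewrite ?eqxx // in nuv; by [left|right].
Qed.

Lemma is_asm_excl_trio x y a : x != y -> List.In a (excl_trio x y) -> is_asm a.
Proof.
move=> nxy [<-|[<-|[<-|//]]] /=; first exact/eqP.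
  by apply/eqP; rewrite eq_sym.
by rewrite cards2 nxy.
Qed.

Lemma is_asm_Ind x y (Z : {set V}) : x != y -> x \notin Z -> y \notin Z ->
  is_asm (Ind [set x; y] Z).
Proof.
move=> nxy xZ yZ; split; first by rewrite cards2 nxy.
by rewrite disjoints_subset; apply/subsetP => w; rewrite !inE => /orP[]/eqP->.
Qed.

Lemma der_excl S x y a b : x != y -> List.In a (excl_trio x y) ->
  List.In b (excl_trio x y) -> a <> b -> S b -> der S (Ctr a).
Proof.
move=> nxy Ha Hb nab Sb; apply: der_rule (r_excl nxy Ha Hb nab) _ => _ [<-|//].
exact: der_asm (is_asm_excl_trio nxy Hb) Sb.
Qed.

Lemma der_mono S U q : der S q -> (forall a, S a -> U a) -> der U q.
Proof.
move=> D SU; elim: D => [a ha Sa|h body R _ IH]; first exact: der_asm ha (SU _ Sa).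
exact: der_rule R IH.
Qed.

Lemma der_Asm S a : der S (Asm a) -> S a.
Proof.
move E: (Asm a) => q D; case: D E => [b _ Sb [->] //|h body R _ E].
by case: R E.
Qed.

Lemma der_Edg S x y : der S (Edg x y) -> S (Arr x y) \/ S (Arr y x).
Proof.
move E: (Edg x y) => q D; case: D E => [//|h body R Hb].
case: R Hb => // u v _ Hb [-> ->]; [left|right]; exact: der_Asm (Hb _ (List.in_eq _ _)).
Qed.

Lemma der_Ctr_Noe S e : der S (Ctr (Noe e)) ->
  exists x y, e = [set x; y] /\ S (Arr x y).
Proof.
move E: (Ctr (Noe e)) => q D; case: D E => [//|h body R Hb].
case: R Hb => //.
- move=> x y a b _ Ha Hb nab Dbody [ea]; subst a.
  have Sb := der_Asm (Dbody _ (List.in_eq _ _)).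
  move: Ha nab => /= [//|[//|[[<-]|//]]].
  move: Hb Sb => /= [<-|[<-|[<-|//]]] Sb nab; first by exists x, y.
    by exists y, x; rewrite setUC.
  by case: (nab erefl).
- move=> x y _ Dbody [->].
  case: (der_Edg (Dbody _ (List.in_eq _ _))) => Sxy; first by exists x, y.
  by exists y, x; rewrite setUC.
Qed.

Lemma rule_body_Ctr h body (c : asm V) : rule h body -> ~ List.In (Ctr c) body.
Proof.
case=> /=.
- by move=> x y a b _ _ _ _ [].
- by move=> x s i _ _ _ Hin; case: (In_map_inv Hin).
- by move=> x y _ [].
- by move=> x y z _ [|[]].
- by move=> x y _ [].
- by move=> x y _ [].
- by move=> x y _ [].
- by move=> x y Z H N Et p _ _ _ _ _ _ Hin; case: (In_map_inv Hin).
Qed.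

Lemma rule_body_Noe h body e : rule h body -> List.In (Asm (Noe e)) body ->
  exists x y, e = [set x; y] /\ h = Ctr (Arr x y).
Proof.
case=> /=.
- move=> x y a b _ Ha Hb nab [[eb]|//]; subst b.
  move: Ha Hb nab => /= [<-|[<-|[<-|//]]] [//|[//|[[<-]|//]]] // _.
    by exists x, y.
  by exists y, x; rewrite setUC.
- by move=> x s i _ _ _ Hin; case: (In_map_inv Hin).
- by move=> x y _ [].
- by move=> x y z _ [|[]].
- by move=> x y _ [].
- by move=> x y _ [].
- by move=> x y _ [].
- by move=> x y Z H N Et p _ _ _ _ _ _ Hin; case: (In_map_inv Hin).
Qed.

Notation adjoin X a := (fun b => X b \/ b = a).

Lemma der_adjoin_Noe S (e : {set V}) q : der (adjoin S (Noe e)) q ->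
  [\/ der S q, q = Asm (Noe e) | exists x y, e = [set x; y] /\ q = Ctr (Arr x y)].
Proof.
elim=> [a ha [Sa|->]|h body R _ IH]; first by constructor 1; exact: der_asm.
  by constructor 2.
have [Dbody|] := pselect (forall b, List.In b body -> der S b).
  by constructor 1; exact: der_rule R Dbody.
move=> /existsNP [b /not_implyP [Hb nDb]].
case: (IH b Hb) => [//|eb|[x [y [_ eb]]]]; rewrite {}eb in Hb.
- by have [x [y [-> ->]]] := rule_body_Noe R Hb; constructor 3; exists x, y.
- by case: (rule_body_Ctr R Hb).
Qed.

Lemma attacks_mono S S' T : (forall a, S a -> S' a) -> attacks S T -> attacks S' T.
Proof. by move=> SS' [a [Ta D]]; exists a; split=> //; exact: der_mono D SS'. Qed.

Lemma admissible_adjoin X a : admissible X -> is_asm a ->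
  defends X (fun b => b = a) -> admissible (adjoin X a).
Proof.
case=> asX cfX dX ha da.
have asXa : asm_set (adjoin X a) by move=> b [/asX|->].
have dXa : defends X (adjoin X a).
  move=> U asU [b [[Xb|eb] Db]]; [apply: dX|apply: da] => //; by exists b.
split=> //.
- move=> /(dXa _ asXa) [b [[Xb|eb] Db]]; apply: cfX; first by exists b.
  by apply: (da X asX); exists b.
- by move=> U asU /(dXa U asU); apply: attacks_mono => b; left.
Qed.

(* Dung's fundamental lemma, iterated: the number of assumptions outside X
   decreases at each step. *)
Lemma admissible_complete_extension X : admissible X ->
  exists2 Y, complete Y & forall a, X a -> Y a.
Proof.
have [n] := ubnP #|[set a | ~~ `[< X a >]]|.
elim: n X => // n IH X ltXn adX.
have [[T [asT dT [a [Ta nXa]]]]|noext] :=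
  pselect (exists T : asm V -> Prop,
             [/\ asm_set T, defends X T & exists a, T a /\ ~ X a]).
- have da : defends X (fun b => b = a).
    by move=> U asU [b [-> Db]]; apply: dT => //; exists a.
  have adXa := admissible_adjoin adX (asT a Ta) da.
  have shrink : [set b | ~~ `[< adjoin X a b >]] \proper [set b | ~~ `[< X b >]].
    apply/properP; split.
      apply/subsetP => b; rewrite !inE; apply: contra => /asboolP Xb.
      by apply/asboolP; left.
    by exists a; rewrite !inE ?negbK; [apply/asboolPn|apply/asboolP; right].
  have ltXan : #|[set b | ~~ `[< adjoin X a b >]]| < n.
    by apply: leq_trans (proper_card shrink) _; rewrite -ltnS.
  have [Y compY XaY] := IH _ ltXan adXa.
  by exists Y => // b Xb; apply: XaY; left.
- exists X => //; split=> // T asT dT a Ta; apply: contrapT => nXa.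
  by apply: noext; exists T; split=> //; exists a.
Qed.

(* Otherwise noe_e could be adjoined to S: it is attacked only through an arrow
   on e, which it attacks back. *)
Lemma preferred_decides_pair S (e : {set V}) : preferred S -> #|e| = 2 ->
  S (Noe e) \/ exists x y, e = [set x; y] /\ S (Arr x y).
Proof.
move=> [[[asS cfS dS] _] maxS] e2.
apply: contrapT => /not_orP [nSe nSarr].
have adSe : admissible (adjoin S (Noe e)).
  split.
  - by move=> b [/asS|->].
  - case=> b [Sb /der_adjoin_Noe [Db|//|[x [y [exy [eb]]]]]].
    + case: Sb Db => [Sb|->] Db; first by apply: cfS; exists b.
      by apply: nSarr; exact: der_Ctr_Noe.
    + by move: Sb; rewrite eb => -[Sxy|//]; apply: nSarr; exists x, y.
  - move=> U asU [b [[Sb|->] Db]].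
      by apply: attacks_mono (dS U asU _); [left|exists b].
    have [x [y [exy Uxy]]] := der_Ctr_Noe Db.
    have nxy : x != y by apply/eqP; exact: asU _ Uxy.
    exists (Arr x y); split=> //.
    apply: (der_excl (b := Noe [set x; y]) nxy); [by left|by right; right; left|by []|].
    by right; rewrite exy.
have [Y compY SY] := admissible_complete_extension adSe.
by apply: nSe; apply: (maxS Y compY) => [a Sa|]; apply: SY; [left|right].
Qed.

Lemma preferred_attacks_Arr S u v : preferred S -> u != v -> ~ S (Arr u v) ->
  der S (Ctr (Arr u v)).
Proof.
move=> prefS nuv nSuv.
have uv2 : #|[set u; v]| = 2 by rewrite cards2 nuv.
have [SNoe|[x [y [exy Sxy]]]] := preferred_decides_pair prefS uv2.
  by apply: (der_excl (b := Noe [set u; v]) nuv _ _ _ SNoe); [left|right; right; left|].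
have [[ex ey]|[ex ey]] := set2_eq_cases (esym exy) nuv; subst x y; first by [].
apply: (der_excl (b := Arr v u) nuv _ _ _ Sxy); [by left|by right; left|].
by case=> /eqP; rewrite (negbTE nuv).
Qed.

Definition d_connected E x y (Z : {set V}) : Prop :=
  exists p, is_path E p x y /\ active E Z p.

Lemma clos_rt_walk E a b : clos_refl_trans V E a b ->
  exists2 s, last a s = b & forall e, List.In e (zip (a :: s) s) -> E e.1 e.2.
Proof.
move/clos_rt_rt1n_iff; elim=> [c|c d w Ecd _ [s lst Es]]; first by exists [::].
by exists (d :: s) => //= e [<-|/Es].
Qed.

Lemma walk_path_neq E a s : (forall w, ~ E w w) ->
  (forall e, List.In e (zip (a :: s) s) -> E e.1 e.2) -> path (fun u v => u != v) a s.
Proof.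
move=> irrE; elim: s a => [//|b s IH] a /= Es; apply/andP; split.
  apply/eqP => eab; apply: (irrE a); rewrite {2}eab.
  exact: (Es (a, b) (or_introl erefl)).
by apply: IH => e He; apply: Es; right.
Qed.

Lemma acyclic_GS S : asm_set S -> conflict_free S -> acyclic (GS S).
Proof.
move=> asS cfS u v Suv /clos_rt_walk [s lst Es].
have Es' : forall e, List.In e (zip (u :: v :: s) (v :: s)) -> GS S e.1 e.2.
  by move=> e /= [<-|/Es].
have irrS : forall w, ~ GS S w w by move=> w /asS.
apply: cfS; exists (Arr u v); split=> //.
apply: der_rule (@r_cycle V u (v :: s) 0 (walk_path_neq irrS Es') lst erefl) _.
move=> b Hb; have [e /Es' Se ->] := In_map_inv Hb.
exact: der_asm (asS _ Se) Se.
Qed.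

Lemma acyclic_asym E u v : acyclic E -> E u v -> ~ E v u.
Proof. by move=> acyE Euv Evu; apply: (acyE _ _ Euv); exact: rt_step. Qed.

Lemma is_path_rev E p x y : is_path E p x y -> is_path E (rev p) y x.
Proof.
case=> sz hd lt un adjp; split.
- by rewrite size_rev.
- by case/lastP: p sz hd lt {un adjp} => [//|p' z] _ _; rewrite last_rcons rev_rcons.
- by case: p sz hd lt {un adjp} => [//|a p'] _ /= -> _; rewrite rev_cons last_rcons.
- by rewrite rev_uniq.
- move=> l r a b /rev_eq_cat; rewrite !rev_cons -!cats1 -!catA /= => /adjp.
  by case; [right|left].
Qed.

Lemma active_rev E Z p : active E Z p -> active E Z (rev p).
Proof.
move=> act l r a b c /rev_eq_cat; rewrite !rev_cons -!cats1 -!catA /=.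
move=> /act [colZ ncolZ]; split; first by case=> Eab Ecb; apply: colZ.
by move=> ncol; apply: ncolZ => -[Ecb Eab]; apply: ncol.
Qed.

Lemma d_connected_sym E x y Z : d_connected E x y Z -> d_connected E y x Z.
Proof.
by case=> p [pxy act]; exists (rev p); split; [exact: is_path_rev|exact: active_rev].
Qed.

Lemma d_connected_of_subgraph E (Et : {set V * V}) x y Z p : acyclic E ->
  (forall e, e \in Et -> E e.1 e.2) ->
  is_path (set_rel Et) p x y -> active (set_rel Et) Z p -> d_connected E x y Z.
Proof.
move=> acyE EtE [sz hd lt un adjp] act.
have subE u v : set_rel Et u v -> E u v by move/EtE.
exists p; split; first by split=> // l r a b /adjp [] /subE; [left|right].
move=> l r a b c pe; have [colZ ncolZ] := act l r a b c pe.
have ab : adj (set_rel Et) a b by apply: (adjp l (c :: r)).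
have bc : adj (set_rel Et) b c by apply: (adjp (rcons l a) r); rewrite pe cat_rcons.
split=> [[Eab Ecb]|ncol]; last by apply: ncolZ => -[/subE Eab /subE Ecb]; apply: ncol.
(* an edge of E traversed against its orientation in Et would close a 2-cycle *)
have col : collider (set_rel Et) a b c.
  split; [case: ab => // /subE Eba|case: bc => // /subE Ebc].
  - by case: (acyclic_asym acyE Eab Eba).
  - by case: (acyclic_asym acyE Ecb Ebc).
case: (colZ col) => [|[z [Zz bz]]]; first by left.
by right; exists z; split=> //; apply: clos_rt_mono bz.
Qed.

Lemma collider_tree_of_d_connected E x y Z : d_connected E x y Z ->
  exists N Et p, collider_tree E x y N Et p /\ active (set_rel Et) Z p.
Proof.
move=> [p [[sz hd lt un adjp] act]].
pose below_collider w := exists l r a b c,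
  [/\ p = l ++ a :: b :: c :: r, collider E a b c & desc E b w].
pose N := [set w | (w \in p) || `[< below_collider w >]].
pose Et := [set e | [&& `[< E e.1 e.2 >], e.1 \in N & e.2 \in N]].
have pN w : w \in p -> w \in N by rewrite inE => ->.
have EtP u v : set_rel Et u v <-> [/\ E u v, u \in N & v \in N].
  rewrite /set_rel inE /=.
  by split=> [/and3P[/asboolP]|[/asboolP -> -> ->]].
have in_p l r a b c : p = l ++ a :: b :: c :: r -> [/\ a \in p, b \in p & c \in p].
  by move=> ->; rewrite !(mem_cat, inE) !eqxx !orbT.
have collider_Et l r a b c : p = l ++ a :: b :: c :: r ->
    collider (set_rel Et) a b c <-> collider E a b c.
  move=> /in_p[/pN aN /pN bN /pN cN].
  split=> [[/EtP[Eab _ _] /EtP[Ecb _ _]]|[Eab Ecb]] //.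
  by split; apply/EtP.
have desc_Et l r a b c w : p = l ++ a :: b :: c :: r -> collider E a b c ->
    desc E b w -> desc (set_rel Et) b w.
  move=> pe col; apply: (clos_rt_restrict (P := fun w => w \in N)).
    by move=> u v uN vN Euv; apply/EtP.
  by move=> w' bw'; rewrite inE; apply/orP; right; apply/asboolP; exists l, r, a, b, c.
exists N, Et, p; split.
  split=> //.
  - by case=> u v /EtP.
  - split=> // l r a b pe.
    have [ap bp] : a \in p /\ b \in p by rewrite pe !(mem_cat, inE) !eqxx !orbT.
    by case: (adjp _ _ _ _ pe) => ?; [left|right]; apply/EtP; rewrite !pN.
  - move=> w; rewrite inE => /orP[->//|/asboolP[l [r [a [b [c [pe col bw]]]]]]] _.
    exists l, r, a, b, c; split=> //; first exact/(collider_Et _ _ _ _ _ pe).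
    exact: desc_Et pe col bw.
move=> l r a b c pe; have [colZ ncolZ] := act l r a b c pe; split.
  move=> /(collider_Et _ _ _ _ _ pe) col; case: (colZ col) => [|[z [Zz bz]]].
    by left.
  by right; exists z; split=> //; exact: desc_Et pe col bz.
by move=> ncol; apply: ncolZ => /(collider_Et _ _ _ _ _ pe).
Qed.

Lemma der_Ctr_Ind_of_d_connected S x y Z : asm_set S -> acyclic (GS S) ->
  x != y -> x \notin Z -> y \notin Z -> d_connected (GS S) x y Z ->
  der S (Ctr (Ind [set x; y] Z)).
Proof.
move=> asS acyS nxy xZ yZ /collider_tree_of_d_connected[N [Et [p [tree act]]]].
apply: der_rule (r_ind nxy xZ yZ acyS tree act) _ => b Hb.
have [e /InP] := In_map_inv Hb; rewrite mem_enum => eEt ->.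
have [/(_ e eEt)[Se _ _] _ _ _] := tree.
exact: der_asm (asS _ Se) Se.
Qed.

Lemma der_Ctr_Ind_support U x y Z : x != y -> der U (Ctr (Ind [set x; y] Z)) ->
  exists Et : {set V * V}, (forall e, e \in Et -> U (Arr e.1 e.2)) /\
    forall E, acyclic E -> (forall e, e \in Et -> E e.1 e.2) -> d_connected E x y Z.
Proof.
move=> nxy; move E0: (Ctr _) => q D; case: D E0 => [//|h body R Dbody].
case: R Dbody => //.
  by move=> u v a b _ Ha _ _ _ [ea]; subst a; move: Ha => /= [|[|[]]].
move=> u v Z' H N Et p _ _ _ _ [_ pathEt _ _] act Dbody [exy ->].
exists Et; split.
  move=> e eEt; apply: der_Asm; apply: Dbody.
  by apply: (In_map (fun e : V * V => Asm (Arr e.1 e.2))); apply/InP; rewrite mem_enum.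
move=> E acyE EtE; have := d_connected_of_subgraph acyE EtE pathEt act.
by have [[-> ->]|[-> ->]] := set2_eq_cases (esym exy) nxy; last exact: d_connected_sym.
Qed.

Lemma admissible_Ind_dsep S x y Z : admissible S ->
  x != y -> x \notin Z -> y \notin Z ->
  S (Ind [set x; y] Z) -> dsep (GS S) x y Z.
Proof.
move=> [asS cfS _] nxy xZ yZ SInd conn; have acyS := acyclic_GS asS cfS.
apply: cfS; exists (Ind [set x; y] Z); split=> //.
exact: der_Ctr_Ind_of_d_connected acyS nxy xZ yZ conn.
Qed.

Lemma preferred_dsep_Ind S x y Z : preferred S ->
  x != y -> x \notin Z -> y \notin Z ->
  dsep (GS S) x y Z -> S (Ind [set x; y] Z).
Proof.
move=> prefS nxy xZ yZ sep; have [[[asS cfS _] completeS] _] := prefS.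
apply: (completeS (fun b => b = Ind [set x; y] Z)) => //.
  by move=> _ ->; exact: is_asm_Ind.
move=> U asU [_ [-> DU]]; have [Et [EtU conn]] := der_Ctr_Ind_support nxy DU.
have [EtS|/existsNP[e /not_implyP[eEt nSe]]] :=
  pselect (forall e, e \in Et -> S (Arr e.1 e.2)).
  by case: sep; apply: conn EtS; exact: acyclic_GS.
have Ue := EtU e eEt.
exists (Arr e.1 e.2); split=> //.
by apply: preferred_attacks_Arr => //; apply/eqP; exact: asU _ Ue.
Qed.

Lemma stable_dsep_Ind S x y Z : stable S ->
  x != y -> x \notin Z -> y \notin Z ->
  dsep (GS S) x y Z -> S (Ind [set x; y] Z).
Proof.
move=> [[asS cfS _] attS] nxy xZ yZ sep; apply: contrapT => nSInd.
have [_ [-> DS]] := attS _ (is_asm_Ind nxy xZ yZ) nSInd.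
have [Et [EtS conn]] := der_Ctr_Ind_support nxy DS.
by apply: sep; apply: conn EtS; exact: acyclic_GS.
Qed.

End DSeparation.

Theorem proposition2 (V : finType) (S : asm V -> Prop) :
  preferred S \/ stable S ->
  forall (x y : V) (Z : {set V}), x != y -> x \notin Z -> y \notin Z ->
    (S (Ind [set x; y] Z) <-> dsep (GS S) x y Z).
Proof.
move=> semS x y Z nxy xZ yZ; split.
  by apply: admissible_Ind_dsep; case: semS => [[[]]|[]].
by case: semS => [prefS|stabS]; [exact: preferred_dsep_Ind|exact: stable_dsep_Ind].
Qed.
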